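(* For every $\varepsilon>0$ there exists $\eta>0$ such that the following holds for all $C\ge12/\varepsilon$. Every $(\varepsilon,C)$-rich graph $G$ on $\{0,1\}^d$ contains a fundamental interval $I$ (at some level $a<d$), a vertex $x\in\mathrm{lhs}(I)$, and a subgraph $G'$ of $G[\mathrm{rhs}(I)]$ such that $G'$ is $(\eta,\varepsilon C/24)$-rich and the larger vertex of every edge of $G'$ lies in $N^+(x)$.
   Context: For distinct $x,y\in\{0,1\}^d$, $\delta(x,y)=\min\{i:x_i\ne y_i\}$; $\{0,1\}^d$ is ordered lexicographically ($x<y$ iff $x_{\delta(x,y)}=0$). For a graph $G$ on $\{0,1\}^d$, a level-$\ell$ edge is an edge $uv$ with $\delta(u,v)=\ell$, $e_\ell(G)$ counts them, $\tau_{\ell,d}=2^{2d-\ell-1}$, a level $\ell\in[d]$ is $\alpha$-rich if $e_\ell(G)\ge\alpha\tau_{\ell,d}$, and $G$ is $(\alpha,C)$-rich if at least $C$ levels are $\alpha$-rich. For $a\in\{0,\dots,d\}$, the fundamental intervals at level $a$ are the classes of strings in $\{0,1\}^d$ agreeing in their first $a$ coordinates. For such an interval $I$ with $a<d$, $\mathrm{lhs}(I)$ (resp. $\mathrm{rhs}(I)$) is the set of strings of $I$ whose $(a+1)$-th coordinate is $0$ (resp. $1$). A graph on $\mathrm{rhs}(I)$ is regarded as a graph on $\{0,1\}^{d-a-1}$ by deleting the first $a+1$ (constant) coordinates, and richness of $G'$ is understood via this identification. $N^+(x)$ is the set of forward neighbours of $x$ in $G$, i.e. vertices $v>x$ with $xv\in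 E(G)$. *)

From HB Require Import structures.
From mathcomp Require Import all_boot all_order all_algebra.
From mathcomp Require Import reals.
Set Implicit Arguments. Unset Strict Implicit. Unset Printing Implicit Defensive.
Import Order.TTheory GRing.Theory Num.Theory.

(* The hypercube {0,1}^d; coordinate i : 'I_d is the (i+1)-th coordinate. *)
Definition cube (d : nat) := {ffun 'I_d -> bool}.

(* delta(x,y) = min { i : x_i <> y_i }, with 1-based indices (levels in [d]). *)
Definition delta (d : nat) (x y : cube d) : nat :=
  (find (fun i : 'I_d => x i != y i) (enum 'I_d)).+1.

Definition lexlt (d : nat) (x y : cube d) : bool :=
  [exists i : 'I_d, [forall j : 'I_d, (j < i)%N ==> (x j == y j)] && ~~ x i && y i].

Definition is_graph (d : nat) (g : rel (cube d)) : Prop :=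
  (forall x y, g x y = g y x) /\ (forall x, ~~ g x x).

(* e_l(G): number of edges uv with delta(u,v) = l (each edge counted once, u < v). *)
Definition nedges (d : nat) (g : rel (cube d)) (l : nat) : nat :=
  #|[set p : cube d * cube d | [&& g p.1 p.2, lexlt p.1 p.2 & delta p.1 p.2 == l]]|.

Definition tau (l d : nat) : nat := 2 ^ (2 * d - l - 1).

Section Rich.
Variable R : realType.
Local Open Scope ring_scope.

Definition rich_level (alpha : R) (d : nat) (g : rel (cube d)) (l : nat) : bool :=
  alpha * (tau l d)%:R <= (nedges g l)%:R.

Definition rich (alpha C : R) (d : nat) (g : rel (cube d)) : Prop :=
  C <= #|[set l : 'I_d | rich_level alpha g l.+1]|%:R.
End Rich.

(* Embedding of {0,1}^(d-a-1) onto rhs(I), where I is the fundamental interval at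
   level a containing x: first a coordinates copied from x, (a+1)-th coordinate 1,
   remaining coordinates from y. *)
Definition rhs_emb (d a : nat) (x : cube d) (y : cube (d - a - 1)) : cube d :=
  [ffun i : 'I_d =>
     if (i < a)%N then x i
     else if (i == a :> nat) then true
     else odflt false (omap y (insub (i - a - 1)%N))].

Definition fwd_nbr (d : nat) (g : rel (cube d)) (x v : cube d) : bool :=
  lexlt x v && g x v.
Arguments rhs_emb {d} a x y.

From HB Require Import structures.
From mathcomp Require Import all_boot all_order all_algebra.
From mathcomp Require Import reals.
From mathcomp Require Import zify ring lra.
Import Order.TTheory GRing.Theory Num.Theory.
Set Implicit Arguments. Unset Strict Implicit. Unset Printing Implicit Defensive.

(* Pick a level i and a vertex x with x_i = 0.  The forward neighbours of x at
   level i lie in rhs(I), I the fundamental interval at level i containing x, and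
   so does every vertex joined to one of them by an edge of level j > i; these
   edges form G', where they have level j - i - 1.  Let p_j(v) in [0,1] be the
   number of level-j edges entering v from below, divided by its maximum
   2^(d-j-1); richness gives sum_v p_j(v) >= eps 2^(d-1) for each of the k >= C
   rich levels.  Weighting (i, x) by the normalised forward degree of x, the
   average number of (eps^2/12)-rich levels of G' is at least
   sum_v sum_(i<j) p_i(v) p_j(v) up to an O((k eps)^2) error, and as p_i <= 1 the
   identity (sum_i p_i)^2 = sum_i p_i^2 + 2 sum_(i<j) p_i p_j makes this large.
   Hence some (i, x) has at least k eps / 24 such levels. *)

(* u < v, first differing at the 0-based coordinate j, i.e. delta u v = j.+1. *)
Definition lexlt_at d (j : 'I_d) (u v : cube d) : bool :=
  [&& [forall k : 'I_d, (k < j)%N ==> (u k == v k)], ~~ u j & v j].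

Lemma lexlt_atP d (j : 'I_d) (u v : cube d) :
  reflect [/\ forall k : 'I_d, (k < j)%N -> u k = v k, u j = false & v j = true]
          (lexlt_at j u v).
Proof.
apply: (iffP and3P) => [[/forallP eq_pre /negbTE -> ->]|[eq_pre -> ->]]; split=> //.
  by move=> k lt_kj; apply/eqP/(implyP (eq_pre k)).
by apply/forallP=> k; apply/implyP=> /eq_pre ->.
Qed.

Lemma lexltE d (u v : cube d) : lexlt u v = [exists j, lexlt_at j u v].
Proof. by apply: eq_existsb => j; rewrite /lexlt_at andbA. Qed.

Lemma lexlt_at_lexlt d (j : 'I_d) (u v : cube d) : lexlt_at j u v -> lexlt u v.
Proof. by move=> uv; rewrite lexltE; apply/existsP; exists j. Qed.

Lemma delta_lexlt_at d (j : 'I_d) (u v : cube d) : lexlt_at j u v -> delta u v = j.+1.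
Proof.
case/lexlt_atP=> eq_pre uj vj; congr S.
set P := fun i : 'I_d => u i != v i.
have hasP : has P (enum 'I_d) by apply/hasP; exists j; rewrite ?mem_enum /P ?uj ?vj.
case: (ltngtP (find P (enum 'I_d)) j) => [lt_fj|lt_jf|//].
- have lt_fd : find P (enum 'I_d) < d := ltn_trans lt_fj (ltn_ord j).
  have := nth_find j hasP; set i := nth j _ _.
  have -> : i = Ordinal lt_fd by apply: val_inj; rewrite /= nth_enum_ord.
  by rewrite /P eq_pre ?eqxx.
- by have := before_find j lt_jf; rewrite nth_ord_enum /P uj vj.
Qed.

Lemma lexlt_delta_at d (j : 'I_d) (u v : cube d) :
  lexlt u v && (delta u v == j.+1) = lexlt_at j u v.
Proof.
apply/andP/idP=> [[]|uv]; last by rewrite (lexlt_at_lexlt uv) (delta_lexlt_at uv).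
rewrite lexltE => /existsP[i uv]; rewrite (delta_lexlt_at uv) eqSS => /eqP/val_inj.
by move=> <-.
Qed.

Lemma lexlt_asym d (u v : cube d) : lexlt u v -> ~~ lexlt v u.
Proof.
rewrite !lexltE => /existsP[i /lexlt_atP[pre_i ui vi]].
apply/negP=> /existsP[j /lexlt_atP[pre_j vj uj]].
case: (ltngtP i j) => [lt_ij|lt_ji|/val_inj eq_ij].
- by move: (pre_j i lt_ij); rewrite ui vi.
- by move: (pre_i j lt_ji); rewrite uj vj.
- by move: ui; rewrite eq_ij uj.
Qed.

Lemma lexlt_at_trans d (i j : 'I_d) (x u v : cube d) :
  (i < j)%N -> lexlt_at i x v -> lexlt_at j u v -> lexlt_at i x u.
Proof.
move=> lt_ij /lexlt_atP[pre_xv xi vi] /lexlt_atP[pre_uv _ _].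
apply/lexlt_atP; split=> // [k lt_ki|]; last by rewrite pre_uv.
by rewrite pre_xv // pre_uv // (ltn_trans lt_ki).
Qed.

Lemma rhs_ord_subproof d a (k : 'I_(d - a - 1)) : (k + a.+1 < d)%N.
Proof. by have := ltn_ord k; lia. Qed.

Definition rhs_ord d a (k : 'I_(d - a - 1)) : 'I_d := Ordinal (rhs_ord_subproof k).

Definition rhs_proj d a (y : cube d) : cube (d - a - 1) := [ffun k => y (rhs_ord k)].
Arguments rhs_proj {d} a y.

Lemma rhs_ordP d a (t : 'I_d) : (a < t)%N -> {k : 'I_(d - a - 1) | rhs_ord k = t}.
Proof.
move=> lt_at; have lt_k : (t - a - 1 < d - a - 1)%N by have := ltn_ord t; lia.
by exists (Ordinal lt_k); apply: val_inj => /=; lia.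
Qed.

Lemma rhs_projK d (i : 'I_d) (x v : cube d) :
  lexlt_at i x v -> rhs_emb i x (rhs_proj i v) = v.
Proof.
case/lexlt_atP=> pre_xv _ vi; apply/ffunP => t; rewrite ffunE.
case: (ltngtP t i) => [lt_ti|lt_it|/val_inj ->]; last by rewrite ?eqxx vi.
- by rewrite pre_xv.
- have [k <-] := rhs_ordP lt_it.
  have -> : (rhs_ord k - i - 1 = k)%N by rewrite /=; lia.
  by rewrite valK /= ffunE.
Qed.

Lemma rhs_proj_inj d (j : 'I_d) (u u' v : cube d) :
  lexlt_at j u v -> lexlt_at j u' v -> rhs_proj j u = rhs_proj j u' -> u = u'.
Proof.
move=> /lexlt_atP[pre_u uj _] /lexlt_atP[pre_u' u'j _] eq_proj.
apply/ffunP => t; case: (ltngtP t j) => [lt_tj|lt_jt|/val_inj ->].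
- by rewrite pre_u ?pre_u'.
- have [k <-] := rhs_ordP lt_jt.
  by have := congr1 (fun y : cube (d - j - 1) => y k) eq_proj; rewrite !ffunE.
- by rewrite uj u'j.
Qed.

Lemma lexlt_at_rhs_proj d a (k : 'I_(d - a - 1)) (u v : cube d) :
  lexlt_at (rhs_ord k) u v -> lexlt_at k (rhs_proj a u) (rhs_proj a v).
Proof.
case/lexlt_atP=> pre_uv uk vk; apply/lexlt_atP; rewrite !ffunE; split=> // l lt_lk.
by rewrite !ffunE pre_uv //= ltn_add2r.
Qed.

Lemma sum_bool_card (T : finType) (P : pred T) : (\sum_(x : T) P x)%N = #|[set x | P x]|.
Proof. by rewrite -sum1dep_card [RHS]big_mkcond. Qed.

Lemma card_cube d : #|cube d| = (2 ^ d)%N.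
Proof. by rewrite card_ffun card_bool card_ord. Qed.

Definition edge_at d (g : rel (cube d)) (j : 'I_d) (u v : cube d) : bool :=
  g u v && lexlt_at j u v.

Definition bdeg d (g : rel (cube d)) (j : 'I_d) (v : cube d) : nat :=
  \sum_(u : cube d) edge_at g j u v.

Lemma nedges_sum_bdeg d (g : rel (cube d)) (j : 'I_d) :
  nedges g j.+1 = (\sum_(v : cube d) bdeg g j v)%N.
Proof.
rewrite /nedges -sum_bool_card.
rewrite (eq_bigr (fun p => edge_at g j p.1 p.2 : nat)) => [|p _]; last first.
  by rewrite /edge_at -lexlt_delta_at.
by rewrite -(pair_bigA _ (fun u v => edge_at g j u v : nat)) exchange_big.
Qed.

Lemma bdeg_le d (g : rel (cube d)) (j : 'I_d) (v : cube d) :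
  (bdeg g j v <= 2 ^ (d - j - 1))%N.
Proof.
rewrite /bdeg sum_bool_card -card_cube.
apply: (@leq_card_in _ _ (rhs_proj j)) => u u'; rewrite !inE.
by case/andP=> _ uv /andP[_ u'v]; apply: rhs_proj_inj uv u'v.
Qed.

Definition fwd_rhs_graph d (g : rel (cube d)) (a : nat) (x : cube d) : rel (cube (d - a - 1)) :=
  fun u w => g (rhs_emb a x u) (rhs_emb a x w) &&
    ((lexlt (rhs_emb a x u) (rhs_emb a x w) && fwd_nbr g x (rhs_emb a x w)) ||
     (lexlt (rhs_emb a x w) (rhs_emb a x u) && fwd_nbr g x (rhs_emb a x u))).
Arguments fwd_rhs_graph {d} g a x.

Section FwdRhsGraph.
Variables (d : nat) (g : rel (cube d)) (a : nat) (x : cube d).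

Lemma fwd_rhs_graph_is_graph : is_graph g -> is_graph (fwd_rhs_graph g a x).
Proof.
case=> g_sym g_irr; split=> [u w|u]; first by rewrite /fwd_rhs_graph g_sym orbC.
by rewrite /fwd_rhs_graph (negbTE (g_irr _)).
Qed.

Lemma fwd_rhs_graph_fwd u w : fwd_rhs_graph g a x u w ->
  lexlt (rhs_emb a x u) (rhs_emb a x w) -> fwd_nbr g x (rhs_emb a x w).
Proof.
case/andP=> _ /orP[/andP[_ //]|/andP[wu _] uw].
by rewrite (negbTE (lexlt_asym uw)) in wu.
Qed.

End FwdRhsGraph.

Lemma bdeg_fwd_le_nedges d (g : rel (cube d)) (i : 'I_d) (x : cube d) (k : 'I_(d - i - 1)) :
  (\sum_(v : cube d) edge_at g i x v * bdeg g (rhs_ord k) v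
     <= nedges (fwd_rhs_graph g i x) k.+1)%N.
Proof.
set j := rhs_ord k; have lt_ij : (i < j)%N by rewrite /=; lia.
set A := [set p : cube d * cube d | edge_at g i x p.1 && edge_at g j p.2 p.1].
have -> : (\sum_v edge_at g i x v * bdeg g j v)%N = #|A|.
  rewrite -sum_bool_card.
  rewrite -(pair_bigA _ (fun v u => edge_at g i x v && edge_at g j u v : nat)).
  apply: eq_bigr => v _.
  by rewrite /bdeg big_distrr; apply: eq_bigr => u _; apply: mulnb.
have embK p : p \in A ->
    rhs_emb i x (rhs_proj i p.1) = p.1 /\ rhs_emb i x (rhs_proj i p.2) = p.2.
  rewrite inE => /andP[/andP[_ xv] /andP[_ uv]].
  by rewrite !rhs_projK // (lexlt_at_trans lt_ij xv uv).
set f := fun p : cube d * cube d => (rhs_proj i p.2, rhs_proj i p.1).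
have f_inj : {in A &, injective f}.
  move=> [v u] [v' u'] /embK[/= ev eu] /embK[/= ev' eu'] [eq_u eq_v].
  by rewrite -ev -eu -ev' -eu' eq_u eq_v.
rewrite -(card_in_imset f_inj) /nedges.
apply/subset_leq_card/subsetP => _ /imsetP[[v u] vuA ->].
have [/= emb_v emb_u] := embK _ vuA.
move: vuA; rewrite inE => /andP[/andP[g_xv xv] /andP[g_uv uv]].
rewrite inE /= lexlt_delta_at (lexlt_at_rhs_proj uv) /fwd_rhs_graph emb_u emb_v.
by rewrite g_uv (lexlt_at_lexlt uv) /fwd_nbr (lexlt_at_lexlt xv) g_xv.
Qed.

Local Open Scope ring_scope.

Lemma sqr_sum_pairs (R : comPzSemiRingType) disp (I : finOrderType disp)
    (L : {set I}) (p : I -> R) :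
  (\sum_(i in L) p i) ^+ 2 =
  \sum_(i in L) p i ^+ 2 + (\sum_(i in L) \sum_(j in L | (i < j)%O) p i * p j) *+ 2.
Proof.
have swap : \sum_(i in L) \sum_(j in L | (j < i)%O) p i * p j =
            \sum_(i in L) \sum_(j in L | (i < j)%O) p i * p j.
  rewrite (exchange_big_dep (fun j => j \in L)) /=; last by move=> i j _ /andP[].
  apply: eq_bigr => j jL; apply: eq_big => [i|i _]; last exact: mulrC.
  by rewrite jL.
rewrite expr2 big_distrlr /= mulr2n addrA -{2}swap -!big_split /=.
apply: eq_bigr => i iL; rewrite (bigD1 i) //= -expr2 -addrA (bigID (fun j => (i < j)%O)) /=.
by congr (_ + (_ + _)); apply: eq_bigl => j; case: (j \in L) => //=; case: ltgtP.
Qed.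

(* In the application T is the cube and f i x v is 2^-(d-i-1) if xv is an edge of
   level i+1 with x < v, and 0 otherwise: inw i v is then p_i(v) and outw i x the
   normalised forward degree of x. *)
Section Averaging.
Variables (R : realFieldType) (disp : Order.disp_t) (I : finOrderType disp) (T : finType).
Variables (f : I -> T -> T -> R) (L : {set I}).

Definition outw i x := \sum_(v : T) f i x v.
Definition inw i v := \sum_(x : T) f i x v.
Definition pairw i x j := \sum_(v : T) f i x v * inw j v.
Definition heavy (theta : R) i x : nat :=
  #|[set j in L | (i < j)%O && (theta <= pairw i x j)]|.
Definition heavy_weight (theta : R) :=
  \sum_(i in L) \sum_(x : T) outw i x * (heavy theta i x)%:R.

Hypothesis f_ge0 : forall i x v, 0 <= f i x v.
Hypothesis inw_le1 : forall i v, inw i v <= 1.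

Lemma sum_const_card (c : R) : \sum_(x : T) c = #|T|%:R * c.
Proof. by rewrite sumr_const mulr_natl. Qed.

Lemma outw_ge0 i x : 0 <= outw i x.
Proof. exact: sumr_ge0. Qed.

Lemma inw_ge0 i v : 0 <= inw i v.
Proof. exact: sumr_ge0. Qed.

Lemma sum_outw i : \sum_(x : T) outw i x = \sum_(v : T) inw i v.
Proof. exact: exchange_big. Qed.

Lemma sum_pairw i j : \sum_(x : T) pairw i x j = \sum_(v : T) inw i v * inw j v.
Proof. by rewrite exchange_big; apply: eq_bigr => v _; rewrite mulr_suml. Qed.

Lemma pairw_le_outw i x j : pairw i x j <= outw i x.
Proof. by apply: ler_sum => v _; rewrite ler_piMr. Qed.

Lemma sum_pairw_sub_le theta i x : 0 <= theta ->
  \sum_(j in L | (i < j)%O) (pairw i x j - theta) <= outw i x * (heavy theta i x)%:R.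
Proof.
move=> theta_ge0; rewrite mulr_natr -sumr_const big_set /=.
rewrite (bigID (fun j => theta <= pairw i x j)) /= -[X in _ <= X]addr0.
apply: lerD; last by apply: sumr_le0 => j /andP[_]; rewrite subr_le0 -ltNge => /ltW.
rewrite (eq_bigl (fun j => [&& j \in L, (i < j)%O & theta <= pairw i x j])).
  by apply: ler_sum => j _; rewrite lerBlDr (le_trans (pairw_le_outw i x j)) ?lerDl.
by move=> j; rewrite andbA.
Qed.

Lemma heavy_weight_ge theta : 0 <= theta ->
  \sum_(i in L) \sum_(j in L | (i < j)%O) \sum_(v : T) inw i v * inw j v
    - #|L|%:R ^+ 2 * (#|T|%:R * theta) <= heavy_weight theta.
Proof.
move=> theta_ge0; have thetaN_ge0 : 0 <= #|T|%:R * theta by rewrite mulr_ge0 ?ler0n.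
have pairs_le : \sum_(i in L) \sum_(j in L | (i < j)%O) #|T|%:R * theta
    <= #|L|%:R ^+ 2 * (#|T|%:R * theta).
  apply: le_trans (_ : \sum_(i in L) \sum_(j in L) #|T|%:R * theta <= _).
    by apply: ler_sum => i _; rewrite [X in _ <= X](bigID (fun j => (i < j)%O)) lerDl sumr_ge0.
  by rewrite !sumr_const -mulrnA -[_ *+ (_ * _)]mulr_natl natrM expr2.
apply: le_trans (lerB (lexx _) pairs_le) _; rewrite -sumrB.
apply: ler_sum => i _; rewrite -sumrB.
under eq_bigr => j _ do rewrite -sum_pairw -sum_const_card -sumrB.
by rewrite exchange_big; apply: ler_sum => x _; apply: sum_pairw_sub_le.
Qed.

Lemma heavy_weight_le theta (B : R) : 0 <= B ->
  (forall i x, i \in L -> 0 < outw i x -> (heavy theta i x)%:R <= B) ->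
  heavy_weight theta <= B * \sum_(i in L) \sum_(v : T) inw i v.
Proof.
move=> B_ge0 heavy_le; rewrite mulr_sumr; apply: ler_sum => i iL.
rewrite -sum_outw mulr_sumr; apply: ler_sum => x _; rewrite mulrC.
have := outw_ge0 i x; rewrite le_eqVlt => /predU1P[<-|outw_gt0]; first by rewrite !mulr0.
by rewrite ler_wpM2r ?heavy_le ?ltW.
Qed.

Lemma sum_inw_pairs_ge (t : R) :
  (t - 1) * \sum_(i in L) \sum_(v : T) inw i v - #|T|%:R * (t ^+ 2 / 4) <=
  2 * \sum_(i in L) \sum_(j in L | (i < j)%O) \sum_(v : T) inw i v * inw j v.
Proof.
set s := fun v => \sum_(i in L) inw i v.
set P := fun v => \sum_(i in L) \sum_(j in L | (i < j)%O) inw i v * inw j v.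
have per_v v : (t - 1) * s v - t ^+ 2 / 4 <= 2 * P v.
  have sq_le : \sum_(i in L) inw i v ^+ 2 <= s v.
    by apply: ler_sum => i _; rewrite expr2 ler_piMr ?inw_ge0.
  have := sqr_sum_pairs L (inw ^~ v); rewrite -/(s v) -/(P v) mulr2n => sq_s.
  have := sqr_ge0 (s v - t / 2); nra.
have -> : \sum_(i in L) \sum_(v : T) inw i v = \sum_(v : T) s v by rewrite exchange_big.
have -> : \sum_(i in L) \sum_(j in L | (i < j)%O) \sum_(v : T) inw i v * inw j v =
          \sum_(v : T) P v.
  rewrite exchange_big; apply: eq_bigr => i _; exact: exchange_big.
by rewrite -sum_const_card !mulr_sumr -sumrB; apply: ler_sum => v _; apply: per_v.
Qed.

Lemma averaging (eps : R) : 0 < eps -> (0 < #|T|)%N -> 12 <= #|L|%:R * eps ->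
    (forall i, i \in L -> eps * #|T|%:R / 2 <= \sum_(v : T) inw i v) ->
  exists2 i, i \in L &
    exists2 x, 0 < outw i x & #|L|%:R * eps / 24 <= (heavy (eps ^+ 2 / 24) i x)%:R.
Proof.
move=> eps_gt0 T_gt0.
set t := #|L|%:R * eps; set N : R := #|T|%:R; set theta := eps ^+ 2 / 24.
set sigma := \sum_(i in L) \sum_(v : T) inw i v.
move=> L_large inw_large.
have [[i x] /and3P[/= iL outw_gt0 heavy_ge]|no_heavy] := pickP
    [pred ix : I * T | [&& ix.1 \in L, 0 < outw ix.1 ix.2 & t / 24 <= (heavy theta ix.1 ix.2)%:R]].
  by exists i => //; exists x.
have weight_le : heavy_weight theta <= t / 24 * sigma.
  apply: heavy_weight_le => [|i x iL outw_gt0]; first by rewrite divr_ge0 // (le_trans _ L_large).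
  by have := no_heavy (i, x); rewrite /= iL outw_gt0 /= => /negbT; rewrite -ltNge => /ltW.
have theta_ge0 : 0 <= theta by rewrite divr_ge0 ?sqr_ge0.
have weight_ge := heavy_weight_ge theta_ge0.
rewrite (_ : #|L|%:R ^+ 2 * (N * theta) = N * t ^+ 2 / 24) in weight_ge; last first.
  by rewrite /t /theta; field.
have pairs_ge := sum_inw_pairs_ge t; rewrite -/sigma -/N in pairs_ge.
have sigma_ge : t * N / 2 <= sigma.
  apply: le_trans (ler_sum _ inw_large).
  by rewrite sumr_const -[X in _ <= X]mulr_natl /t !mulrA.
have N_gt0 : 0 < N by rewrite ltr0n.
(* The bounds above give (11 t - 12) sigma <= 4 N t^2, impossible as t >= 12. *)
have : 0 <= (11 * t - 12) * (sigma - t * N / 2) by apply: mulr_ge0; lra.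
have : 0 < t * N * (3 * t - 12) by apply: mulr_gt0; [apply: mulr_gt0|]; lra.
nra.
Qed.
End Averaging.

Lemma tauS_double (l m : nat) : (l < m)%N -> (tau l.+1 m * 2 = 2 ^ m * 2 ^ (m - l - 1))%N.
Proof. by move=> lt_lm; rewrite /tau -expnSr -expnD; congr (2 ^ _)%N; lia. Qed.

Section EdgeWeights.
Variables (R : realType) (d : nat) (g : rel (cube d)).

Definition rhs_size (i : 'I_d) : R := (2 ^ (d - i - 1))%:R.

Definition edge_weight (i : 'I_d) (x v : cube d) : R := (edge_at g i x v)%:R / rhs_size i.

Lemma rhs_size_gt0 i : 0 < rhs_size i.
Proof. by rewrite ltr0n expn_gt0. Qed.

Lemma edge_weight_ge0 i x v : 0 <= edge_weight i x v.
Proof. by rewrite divr_ge0 ?ler0n ?ltW ?rhs_size_gt0. Qed.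

Lemma inw_edge_weight i v : inw edge_weight i v = (bdeg g i v)%:R / rhs_size i.
Proof. by rewrite /inw -mulr_suml natr_sum. Qed.

Lemma inw_edge_weight_le1 i v : inw edge_weight i v <= 1.
Proof. by rewrite inw_edge_weight ler_pdivrMr ?rhs_size_gt0 // mul1r ler_nat bdeg_le. Qed.

Lemma sum_inw_edge_weight_ge (eps : R) (i : 'I_d) : rich_level eps g i.+1 ->
  eps * #|cube d|%:R / 2 <= \sum_(v : cube d) inw edge_weight i v.
Proof.
rewrite /rich_level => rich_i.
under eq_bigr => v _ do rewrite inw_edge_weight.
rewrite -mulr_suml -natr_sum -nedges_sum_bdeg ler_pdivlMr ?rhs_size_gt0 //.
have tauE : (tau i.+1 d)%:R * 2 = (2 ^ d)%:R * rhs_size i.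
  by rewrite /rhs_size -!natrM tauS_double.
by apply: le_trans rich_i; rewrite card_cube; nra.
Qed.

Lemma outw_edge_weight_eq0 (i : 'I_d) (x : cube d) : x i -> outw edge_weight i x = 0.
Proof.
move=> xi; rewrite /outw big1 // => v _; rewrite /edge_weight.
suff -> : edge_at g i x v = false by rewrite mul0r.
by apply: contraTF xi => /andP[_ /lexlt_atP[_ -> _]].
Qed.

Lemma rich_level_fwd_rhs_graph (theta : R) (i : 'I_d) (x : cube d) (k : 'I_(d - i - 1)) :
  theta <= pairw edge_weight i x (rhs_ord k) ->
  rich_level (2 * theta) (fwd_rhs_graph g i x) k.+1.
Proof.
set j := rhs_ord k.
have pairwE : pairw edge_weight i x j =
    (\sum_v edge_at g i x v * bdeg g j v)%N%:R / (rhs_size i * rhs_size j).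
  rewrite /pairw natr_sum mulr_suml; apply: eq_bigr => v _.
  by rewrite inw_edge_weight natrM /edge_weight invfM mulrACA.
have tauE : (tau k.+1 (d - i - 1))%:R * 2 = rhs_size i * rhs_size j.
  rewrite /rhs_size -!natrM tauS_double // (_ : (d - i - 1 - k - 1 = d - j - 1)%N) //.
  by rewrite /=; lia.
rewrite pairwE ler_pdivlMr ?mulr_gt0 ?rhs_size_gt0 // -tauE => le_theta.
apply: le_trans (le_trans _ le_theta) _; first lra.
by rewrite ler_nat bdeg_fwd_le_nedges.
Qed.

Lemma fwd_rhs_graph_rich (L : {set 'I_d}) (theta : R) (i : 'I_d) (x : cube d) :
  rich (2 * theta) (heavy edge_weight L theta i x)%:R (fwd_rhs_graph g i x).
Proof.
rewrite /rich ler_nat /heavy.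
apply: leq_trans (subset_leq_card _) (leq_imset_card (@rhs_ord d i) _).
apply/subsetP => j; rewrite inE => /andP[_ /andP[lt_ij heavy_j]].
case: (rhs_ordP lt_ij) heavy_j => k <- heavy_k.
by apply: imset_f; rewrite inE rich_level_fwd_rhs_graph.
Qed.

End EdgeWeights.

Theorem lemma4p3 (R : realType) (eps : R) :
  0 < eps ->
  exists2 eta : R, 0 < eta &
  forall (C : R), 12 / eps <= C ->
  forall (d : nat) (g : rel (cube d)),
    is_graph g -> rich eps C g ->
    exists (a : nat) (x : cube d) (g' : rel (cube (d - a - 1))),
      [/\ (a < d)%N,
          (* x in lhs(I): I = the fundamental interval at level a containing x *)
          (forall i : 'I_d, i = a :> nat -> x i = false),
          (* G' is a subgraph of G[rhs(I)] (transported to {0,1}^(d-a-1)) *)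
          is_graph g' /\
          (forall u v, g' u v -> g (rhs_emb a x u) (rhs_emb a x v)),
          rich eta (eps * C / 24) g' &
          (* the larger vertex of every edge of G' lies in N^+(x) *)
          (forall u v, g' u v -> lexlt (rhs_emb a x u) (rhs_emb a x v) ->
             fwd_nbr g x (rhs_emb a x v))].
Proof.
move=> eps_gt0; exists (eps ^+ 2 / 12) => [|C C_ge d g g_graph g_rich].
  by rewrite divr_gt0 ?exprn_gt0.
set L := [set l : 'I_d | rich_level eps g l.+1].
have L_large : 12 <= #|L|%:R * eps by rewrite -ler_pdivrMr // (le_trans C_ge g_rich).
have [||i iL [x outw_gt0 heavy_ge]] :=
  averaging (edge_weight_ge0 _ g) (inw_edge_weight_le1 _ g) eps_gt0 _ L_large.
- by rewrite card_cube expn_gt0.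
- by move=> i; rewrite inE; apply: sum_inw_edge_weight_ge.
exists (nat_of_ord i), x, (fwd_rhs_graph g i x); split.
- exact: ltn_ord.
- move=> t /val_inj ->; apply: contraTF outw_gt0 => /outw_edge_weight_eq0 ->.
  by rewrite ltxx.
- by split=> [|u v /andP[]//]; apply: fwd_rhs_graph_is_graph.
- have -> : eps ^+ 2 / 12 = 2 * (eps ^+ 2 / 24) by field.
  apply: le_trans (@fwd_rhs_graph_rich R d g L _ i x); apply: le_trans heavy_ge.
  by move: g_rich; rewrite /rich -/L; nra.
- exact: fwd_rhs_graph_fwd.
Qed.
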